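(* Assume the setting below, on the Shishkin mesh $S_N$ (i.e. $\lambda=N$) with mesh parameter $a\ge a_*:=\dfrac{\beta}{b(0)-\beta}$. Then the truncation error of $v$ satisfies \[ |\tau_i[v]|\le C\begin{cases} N^{-2}(\ln N)^2e^{-\beta x_i/\varepsilon}, & 1\le i\le J-1,\\ N^{-a}, & J\le i\le N-1,\end{cases} \] with $C$ independent of $\varepsilon$ and $N$.
   Context: Let $0<\varepsilon<1$. Let $b,c,f\in C^4[0,1]$, and let $\beta$ be a constant with $b(x)>\beta>0$ and $c(x)\ge0$ on $[0,1]$. Let $u$ be the solution of $-\varepsilon u''-bu'+cu=f$ on $(0,1)$ with $u(0)=u(1)=0$. Define \[ v(x)=-\frac{\varepsilon u'(0)}{b(0)}e^{-b(0)x/\varepsilon}. \] Mesh $S_\lambda$, $\lambda\in\{N,\varepsilon^{-1}\}$. $N$ is a positive integer. $Q\in(0,1)$ is a fixed rational with $J=QN$ an integer, and $a>0$. Set $\xi=(a\varepsilon/\beta)\ln\lambda$, assumed $\le Q$, and $h=\xi/J$, $H=(1-\xi)/(N-J)$. The mesh points are $x_i=ih$ ($0\le i\le J$) and $x_i=\xi+(i-J)H$ ($J\le i\le N$). Write $h_i=x_i-x_{i-1}$ and $\hbar_i=(h_i+h_{i+1})/2$. Define $D^+g(x_i)=(g(x_{i+1})-g(x_i))/h_{i+1}$, $D^-g(x_i)=(g(x_i)-g(x_{i-1}))/h_i$, $D''g(x_i)=(D^+g(x_i)-D^-g(x_i))/\hbar_i$. Let $\sigma(\rho)=2\rho/(e^{2\rho}-1)$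 for $\rho>0$, $\sigma(0)=1$, and $\rho_i=b(x_i)h_{i+1}/(2\varepsilon)$. The truncation error of the ASI scheme is \[ \tau_i[g]=-\varepsilon\sigma(\rho_i)D''g(x_i)-b(x_i)D^+g(x_i)+\varepsilon g''(x_i)+b(x_i)g'(x_i),\qquad 1\le i\le N-1. \] *)

From Stdlib Require Import Reals Lra.
From Coquelicot Require Import Coquelicot.
Open Scope R_scope.

Definition C4_01 (g : R -> R) : Prop :=
  (forall k : nat, (k <= 4)%nat -> forall x, 0 <= x <= 1 -> ex_derive_n g k x) /\
  (forall x, 0 <= x <= 1 -> continuous (Derive_n g 4) x).

Definition is_solution (eps : R) (b c f u : R -> R) : Prop :=
  (forall x, 0 <= x <= 1 -> ex_derive u x /\ ex_derive (Derive u) x) /\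
  (forall x, 0 <= x <= 1 -> continuous (Derive_n u 2) x) /\
  (forall x, 0 < x < 1 ->
     - eps * Derive_n u 2 x - b x * Derive u x + c x * u x = f x) /\
  u 0 = 0 /\ u 1 = 0.

Definition vfun (eps : R) (b u : R -> R) (x : R) : R :=
  - (eps * Derive u 0 / b 0) * exp (- b 0 * x / eps).

Definition xi (beta a eps lambda : R) : R := (a * eps / beta) * ln lambda.

Definition mesh (beta a eps lambda : R) (N J : nat) (i : nat) : R :=
  let xi0 := xi beta a eps lambda in
  if (i <=? J)%nat then INR i * (xi0 / INR J)
  else xi0 + (INR i - INR J) * ((1 - xi0) / (INR N - INR J)).

Definition sigma (rho : R) : R :=
  if Req_EM_T rho 0 then 1 else 2 * rho / (exp (2 * rho) - 1).

(* Truncation error tau_i[g] of the ASI scheme (i >= 1). *)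
Definition tau (beta a eps lambda : R) (N J : nat) (b g : R -> R) (i : nat) : R :=
  let x := mesh beta a eps lambda N J in
  let hi := x i - x (i - 1)%nat in
  let hi1 := x (S i) - x i in
  let hbar := (hi + hi1) / 2 in
  let Dp := (g (x (S i)) - g (x i)) / hi1 in
  let Dm := (g (x i) - g (x (i - 1)%nat)) / hi in
  let D2 := (Dp - Dm) / hbar in
  let rho := b (x i) * hi1 / (2 * eps) in
  - eps * sigma rho * D2 - b (x i) * Dp
  + eps * Derive_n g 2 (x i) + b (x i) * Derive g (x i).

From Pilot Require Import Defs.
From Stdlib Require Import Reals Lra Lia Psatz.
From Coquelicot Require Import Coquelicot.
Open Scope R_scope.

(* The layer term is v = - A exp (- b(0) x / eps) with A = eps u'(0) / b(0).  It solves
   the frozen-coefficient equation - eps v'' - b(0) v' = 0, for which the ASI scheme is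
   exact on a uniform mesh, so its truncation error is driven by b(x_i) - b(0) = O(x_i).
   On the fine part (step h = a eps ln N / (beta Q N)) a second-order expansion of the
   fitting defect in (b(0) - b(x_i)) h / eps gives
   |tau_i| <= C |A| (h/eps)^2 (1 + (x_i/eps)^4) exp (- b(0) x_i / eps), and the polynomial
   factor is absorbed by exp (- (b(0) - beta) x_i / eps).  On the coarse part every term of
   tau_i is bounded by the size of v at x_(i-1) >= xi - h divided by the step H >= 1/N;
   since exp (- b(0) xi / eps) = N^(- a b(0) / beta), this is O(N^-a) as soon as
   a >= beta / (b(0) - beta).  Finally A is bounded uniformly in eps: |u| <= C by a comparison
   function, and integrating the equation once over (0, x_1), where eps u'(x_1) = u(eps),
   bounds eps u'(0). *)

Lemma continuous_of_ex_derive (f : R -> R) (x : R) :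
  ex_derive f x -> continuous f x.
Proof. exact (@ex_derive_continuous R_AbsRing R_NormedModule f x). Qed.

Lemma mvt_abs_le (f df : R -> R) (a b M : R) :
  (forall x, Rmin a b < x < Rmax a b -> is_derive f x (df x)) ->
  (forall x, Rmin a b <= x <= Rmax a b -> continuous f x) ->
  (forall x, Rmin a b <= x <= Rmax a b -> Rabs (df x) <= M) ->
  Rabs (f b - f a) <= M * Rabs (b - a).
Proof.
  intros Hd Hc Hb.
  destruct (MVT_gen f a b df Hd) as [c [Hc1 ->]].
  - intros x Hx. apply continuity_pt_filterlim, Hc, Hx.
  - rewrite Rabs_mult. apply Rmult_le_compat_r; [apply Rabs_pos | apply Hb, Hc1].
Qed.

Lemma mvt_abs_le_closed (f df : R -> R) (a b M : R) :
  (forall x, Rmin a b <= x <= Rmax a b -> is_derive f x (df x)) ->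
  (forall x, Rmin a b <= x <= Rmax a b -> Rabs (df x) <= M) ->
  Rabs (f b - f a) <= M * Rabs (b - a).
Proof.
  intros Hd Hb. apply (mvt_abs_le f df); auto.
  - intros x Hx. apply Hd. lra.
  - intros x Hx. apply continuous_of_ex_derive. exists (df x). apply Hd, Hx.
Qed.

Lemma bounded_on_01 (g : R -> R) : (forall x, 0 <= x <= 1 -> continuous g x) ->
  exists M, 0 <= M /\ forall x, 0 <= x <= 1 -> Rabs (g x) <= M.
Proof.
  intros Hc.
  assert (Cg : forall x, 0 <= x <= 1 -> continuity_pt g x)
    by (intros x Hx; apply continuity_pt_filterlim, Hc, Hx).
  destruct (continuity_ab_maj g 0 1 ltac:(lra) Cg) as [xM [HM _]].
  destruct (continuity_ab_min g 0 1 ltac:(lra) Cg) as [xm [Hm _]].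
  exists (Rabs (g xM) + Rabs (g xm)).
  assert (H1 := Rle_abs (g xM)). assert (H2 := Rle_abs (- g xm)). rewrite Rabs_Ropp in H2.
  assert (H3 := Rabs_pos (g xM)). assert (H4 := Rabs_pos (g xm)).
  split; [lra |]. intros x Hx. specialize (HM x Hx). specialize (Hm x Hx).
  apply Rabs_le. lra.
Qed.

Lemma C4_01_derive_bounded (g : R -> R) (k : nat) : C4_01 g -> (k < 4)%nat ->
  exists M, 0 <= M /\ forall x, 0 <= x <= 1 -> Rabs (Derive_n g k x) <= M.
Proof.
  intros [Hd _] Hk. apply bounded_on_01. intros x Hx.
  apply continuous_of_ex_derive. exact (Hd (S k) Hk x Hx).
Qed.

Lemma abs_sub_at_0_le (g : R -> R) (L : R) :
  (forall z, 0 <= z <= 1 -> ex_derive g z) -> (forall z, 0 <= z <= 1 -> Rabs (Derive g z) <= L) ->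
  forall x, 0 <= x <= 1 -> Rabs (g x - g 0) <= L * x.
Proof.
  intros Hd HL x Hx. rewrite <- (Rabs_pos_eq x) at 2 by lra. rewrite <- (Rminus_0_r x) at 2.
  apply (mvt_abs_le_closed g (Derive g)); rewrite Rmin_left, Rmax_right by lra; intros z Hz.
  - apply Derive_correct, Hd. lra.
  - apply HL. lra.
Qed.

Lemma taylor2_abs_le (f f1 f2 : R -> R) (s t P : R) :
  (forall z, is_derive f z (f1 z)) -> (forall z, is_derive f1 z (f2 z)) ->
  f s = 0 -> f1 s = 0 ->
  (forall z, Rmin s t <= z <= Rmax s t -> Rabs (f2 z) <= P) ->
  Rabs (f t) <= P * (t - s) ^ 2.
Proof.
  intros Df Df1 Hf Hf1 HP.
  assert (HP0 : 0 <= P).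
  { assert (H := HP s ltac:(unfold Rmin, Rmax; destruct Rle_dec; lra)).
    assert (H' := Rabs_pos (f2 s)). lra. }
  assert (Hf1z : forall z, Rmin s t <= z <= Rmax s t -> Rabs (f1 z) <= P * Rabs (t - s)).
  { intros z Hz. replace (f1 z) with (f1 z - f1 s) by lra.
    eapply Rle_trans; [apply (mvt_abs_le_closed f1 f2); [intros; apply Df1 |] |].
    - intros x Hx. apply HP. unfold Rmin, Rmax in *; do 2 destruct Rle_dec; lra.
    - apply Rmult_le_compat_l; [lra |].
      unfold Rmin, Rmax, Rabs in *; destruct Rle_dec; do 2 destruct Rcase_abs; lra. }
  replace (f t) with (f t - f s) by lra.
  eapply Rle_trans; [apply (mvt_abs_le_closed f f1); [intros; apply Df | exact Hf1z] |].
  rewrite <- (pow2_abs (t - s)). right. ring.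
Qed.

Lemma exp_le_compat (x y : R) : x <= y -> exp x <= exp y.
Proof.
  intros H. destruct (Req_dec x y) as [-> | Hn]; [lra |].
  left. apply exp_increasing. lra.
Qed.

Lemma exp_neg_le_1 (y : R) : 0 <= y -> exp (- y) <= 1.
Proof. intros Hy. rewrite <- exp_0. apply exp_le_compat. lra. Qed.

Lemma ln_le_id (x : R) : 0 < x -> ln x <= x.
Proof.
  intros Hx. destruct (Rle_dec (ln x) x) as [H | H]; [exact H |].
  assert (Hlt : exp x < exp (ln x)) by (apply exp_increasing; lra).
  rewrite exp_ln in Hlt by lra. assert (H1 := exp_ineq1_le x). lra.
Qed.

Lemma exp_sub1_ge (s : R) : s <= exp s - 1.
Proof. assert (H := exp_ineq1_le s). lra. Qed.

Lemma one_sub_exp_neg_bounds (y : R) : 0 <= y -> 0 <= 1 - exp (- y) <= Rmin y 1.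
Proof.
  intros Hy. assert (H := exp_ineq1_le (- y)). assert (H2 := exp_pos (- y)).
  assert (H3 := exp_neg_le_1 y Hy). unfold Rmin. destruct Rle_dec; lra.
Qed.

Lemma sinh_bounds (z : R) : 0 <= z -> 0 <= exp z - exp (- z) <= 2 * z * exp z.
Proof.
  intros Hz.
  assert (E : exp (- z) = exp z * exp (- (2 * z))) by (rewrite <- exp_plus; f_equal; ring).
  assert (H1 := exp_ineq1_le (- (2 * z))). assert (H2 := exp_neg_le_1 (2 * z) ltac:(lra)).
  assert (Hp := exp_pos z). rewrite E. split; nra.
Qed.

Lemma mul_exp_neg_le (d y : R) : 0 < d -> y * exp (- (d * y)) <= / d.
Proof.
  intros Hd. assert (H := exp_ineq1_le (d * y)). assert (Hp := exp_pos (d * y)).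
  rewrite exp_Ropp. apply Rmult_le_reg_l with (d * exp (d * y)); [nra |].
  field_simplify; nra.
Qed.

Lemma one_add_pow4_mul_exp_neg_le (d y : R) : 0 < d -> 0 <= y ->
  (1 + y ^ 4) * exp (- (d * y)) <= 1 + 256 / d ^ 4.
Proof.
  intros Hd Hy.
  assert (H4 : (d * y) ^ 4 <= 256 * exp (d * y)).
  { assert (E : exp (d * y) = exp (d * y / 4) ^ 4).
    { simpl. rewrite Rmult_1_r, <- !exp_plus. f_equal. field. }
    rewrite E. assert (H1 := exp_ineq1_le (d * y / 4)).
    assert (H2 : (d * y / 4) ^ 4 <= exp (d * y / 4) ^ 4) by (apply pow_incr; nra).
    replace ((d * y) ^ 4) with (256 * (d * y / 4) ^ 4) by field. lra. }
  assert (Hp := exp_pos (d * y)). assert (Hd4 : 0 < d ^ 4) by (apply pow_lt; lra).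
  assert (H1 := exp_neg_le_1 (d * y) ltac:(nra)).
  assert (Hy4 : y ^ 4 * exp (- (d * y)) <= 256 / d ^ 4).
  { rewrite exp_Ropp. apply Rmult_le_reg_l with (d ^ 4 * exp (d * y)); [nra |].
    rewrite Rpow_mult_distr in H4. field_simplify; lra. }
  lra.
Qed.

(** * The Bernoulli function and the fitting defect *)

Definition bernoulli (s : R) : R := s / (exp s - 1).

(* On a uniform mesh of step h = eps r, the ASI truncation error of the layer
   - A exp (- b0 x / eps) at x0 is A exp (- b0 x0 / eps) fitting_defect (b(x0) r) (b0 r) / (eps r^2)
   (asi_error_layer_uniform).  The scheme is exact for constant b, and accordingly the
   defect vanishes to second order on the diagonal t = s. *)
Definition fitting_defect (s t : R) : R :=
  bernoulli s * (exp t + exp (- t) - 2) + s * (exp (- t) - 1) + t * (s - t).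

Lemma bernoulli_bounds (s : R) : 0 < s -> 0 < bernoulli s <= 1.
Proof.
  intros Hs. unfold bernoulli. assert (H := exp_sub1_ge s).
  split; [apply Rdiv_lt_0_compat; lra |].
  apply Rmult_le_reg_r with (exp s - 1); [lra |]. field_simplify; lra.
Qed.

Lemma sigma_bernoulli (rho : R) : 0 < rho -> Defs.sigma rho = bernoulli (2 * rho).
Proof. intros H. unfold Defs.sigma. destruct (Req_EM_T rho 0); [lra | reflexivity]. Qed.

Lemma sigma_bounds (rho : R) : 0 < rho -> 0 <= Defs.sigma rho <= 1.
Proof.
  intros H. rewrite sigma_bernoulli by exact H.
  destruct (bernoulli_bounds (2 * rho)) as [H1 H2]; lra.
Qed.

Lemma bernoulli_numerator_bound (s T0 : R) : 0 < s <= T0 ->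
  Rabs (s * exp s + s - 2 * exp s + 2) <= exp T0 * s ^ 3.
Proof.
  intros Hs.
  assert (H := taylor2_abs_le (fun z => z * exp z + z - 2 * exp z + 2)
    (fun z => z * exp z - exp z + 1) (fun z => z * exp z) 0 s (exp T0 * s)).
  replace (exp T0 * s ^ 3) with (exp T0 * s * (s - 0) ^ 2) by ring.
  apply H; clear H.
  - intros z. auto_derive; auto. ring.
  - intros z. auto_derive; auto. ring.
  - rewrite exp_0. ring.
  - rewrite exp_0. ring.
  - intros z Hz. rewrite Rmin_left, Rmax_right in Hz by lra.
    assert (exp z <= exp T0) by (apply exp_le_compat; lra).
    assert (0 < exp z) by apply exp_pos.
    rewrite Rabs_pos_eq; nra.
Qed.

(* The second and third t-derivatives of [fitting_defect s t], at t = s and at t = z. *)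
Lemma fitting_defect_dt2_diag_bound (s T0 : R) : 0 < s <= T0 ->
  Rabs (bernoulli s * (exp s + exp (- s)) + s * exp (- s) - 2) <= exp T0 * s ^ 2.
Proof.
  intros Hs. assert (He := exp_sub1_ge s). assert (Hes := exp_pos s).
  unfold bernoulli. rewrite exp_Ropp.
  replace (s / (exp s - 1) * (exp s + / exp s) + s * / exp s - 2)
    with ((s * exp s + s - 2 * exp s + 2) / (exp s - 1)) by (field; lra).
  unfold Rdiv. rewrite Rabs_mult, Rabs_inv, (Rabs_pos_eq (exp s - 1)) by lra.
  apply Rmult_le_reg_r with (exp s - 1); [lra |].
  rewrite Rmult_assoc, Rinv_l, Rmult_1_r by lra.
  eapply Rle_trans; [apply (bernoulli_numerator_bound s T0 Hs) |].
  assert (0 < exp T0) by apply exp_pos.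
  replace (exp T0 * s ^ 3) with (exp T0 * s ^ 2 * s) by ring.
  apply Rmult_le_compat_l; nra.
Qed.

Lemma fitting_defect_dt3_bound (s z D T0 : R) : 0 < s -> 0 <= D -> 0 < z <= T0 -> z <= s + D ->
  Rabs (bernoulli s * (exp z - exp (- z)) - s * exp (- z)) <= (2 * exp T0 + 1) * (s + D).
Proof.
  intros Hs HD Hz HzD. assert (Hb := bernoulli_bounds s Hs).
  assert (Hsh := sinh_bounds z ltac:(lra)).
  assert (Ez : exp z <= exp T0) by (apply exp_le_compat; lra).
  assert (Emz : exp (- z) <= 1) by (apply exp_neg_le_1; lra).
  assert (Emz' := exp_pos (- z)). assert (Ez' := exp_pos z).
  assert (A1 : 0 <= bernoulli s * (exp z - exp (- z)) <= exp z - exp (- z)) by (split; nra).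
  assert (A2 : 2 * z * exp z <= 2 * (s + D) * exp T0) by nra.
  assert (A3 : 0 <= s * exp (- z) <= s) by (split; nra).
  assert (HT := exp_pos T0). apply Rabs_le. split; nra.
Qed.

Lemma fitting_defect_bound (s t T0 : R) : 0 < s <= T0 -> 0 < t <= T0 ->
  Rabs (fitting_defect s t)
  <= (exp T0 * s ^ 2 + (2 * exp T0 + 1) * (s + Rabs (t - s)) * Rabs (t - s)) * (t - s) ^ 2.
Proof.
  intros Hs Ht. set (B := bernoulli s). set (c3 := 2 * exp T0 + 1). set (d := t - s).
  assert (He := exp_sub1_ge s). assert (Hes := exp_pos s). assert (HT := exp_pos T0).
  assert (EB : B = s / (exp s - 1)) by reflexivity.
  assert (Hd := Rabs_pos d).
  assert (Hseg : forall z, Rmin s t <= z <= Rmax s t -> 0 < z <= T0 /\ Rabs (z - s) <= Rabs d).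
  { intros z Hz. unfold d, Rmin, Rmax, Rabs in *.
    destruct Rle_dec; repeat destruct Rcase_abs; lra. }
  apply (taylor2_abs_le (fitting_defect s)
    (fun z => B * (exp z - exp (- z)) - s * exp (- z) + s - 2 * z)
    (fun z => B * (exp z + exp (- z)) + s * exp (- z) - 2)).
  - intros z. unfold fitting_defect. fold B. auto_derive; auto. ring.
  - intros z. auto_derive; auto. ring.
  - unfold fitting_defect. fold B. rewrite EB, exp_Ropp. field. lra.
  - rewrite EB, exp_Ropp. field. lra.
  - intros z Hz. destruct (Hseg z Hz) as [Hz0 Hzs].
    set (f2 := fun z => B * (exp z + exp (- z)) + s * exp (- z) - 2).
    change (Rabs (f2 z) <= exp T0 * s ^ 2 + c3 * (s + Rabs d) * Rabs d).
    replace (f2 z) with ((f2 z - f2 s) + f2 s) by ring.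
    eapply Rle_trans; [apply Rabs_triang |].
    assert (H2 : Rabs (f2 s) <= exp T0 * s ^ 2) by apply (fitting_defect_dt2_diag_bound s T0 Hs).
    assert (H3 : Rabs (f2 z - f2 s) <= c3 * (s + Rabs d) * Rabs (z - s)).
    { apply (mvt_abs_le_closed f2 (fun z => B * (exp z - exp (- z)) - s * exp (- z))).
      - intros x _. unfold f2. auto_derive; auto. ring.
      - intros x Hx. assert (Hxs : Rmin s t <= x <= Rmax s t)
          by (unfold Rmin, Rmax in *; do 2 destruct Rle_dec; lra).
        destruct (Hseg x Hxs) as [Hx0 Hxd].
        apply fitting_defect_dt3_bound; [lra | lra | lra |].
        assert (H := Rle_abs (x - s)). lra. }
    assert (c3 * (s + Rabs d) * Rabs (z - s) <= c3 * (s + Rabs d) * Rabs d)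
      by (apply Rmult_le_compat_l; [unfold c3; nra | lra]).
    lra.
Qed.

Lemma fitting_defect_scaled_bound (eps r s t T0 Bm D : R) :
  0 < eps <= 1 -> 0 < r -> 0 < s <= T0 -> 0 < t <= T0 -> s <= Bm * r -> 0 <= D ->
  Rabs (t - s) <= D * eps * r ->
  Rabs (fitting_defect s t) / (eps * r ^ 2)
  <= r ^ 2 * (exp T0 * Bm ^ 2 * D ^ 2 + (2 * exp T0 + 1) * (Bm * D ^ 3 + D ^ 4)).
Proof.
  intros He Hr Hs Ht HsB HD Hts.
  set (c3 := 2 * exp T0 + 1). assert (Hd0 := Rabs_pos (t - s)). set (d := Rabs (t - s)) in *.
  assert (HT := exp_pos T0). assert (Hr2 : 0 < r ^ 2) by (apply pow_lt; lra).
  assert (Her : 0 < eps * r ^ 2) by (apply Rmult_lt_0_compat; lra).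
  assert (HBm : 0 <= Bm) by (destruct (Rle_lt_dec 0 Bm); [lra | nra]).
  assert (Hse : 0 <= s) by lra.
  assert (Hdr : d <= D * r).
  { assert (D * eps <= D) by nra. assert (D * eps * r <= D * r) by (apply Rmult_le_compat_r; lra). lra. }
  assert (Hbr : exp T0 * s ^ 2 + c3 * (s + d) * d <= r ^ 2 * (exp T0 * Bm ^ 2 + c3 * (Bm + D) * D)).
  { assert (exp T0 * s ^ 2 <= exp T0 * (Bm * r) ^ 2)
      by (apply Rmult_le_compat_l; [lra | apply pow_incr; lra]).
    assert ((s + d) * d <= (Bm * r + D * r) * (D * r)) by (apply Rmult_le_compat; lra).
    assert (c3 * ((s + d) * d) <= c3 * ((Bm * r + D * r) * (D * r)))
      by (apply Rmult_le_compat_l; unfold c3; lra).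
    nra. }
  assert (Hsq : (t - s) ^ 2 / (eps * r ^ 2) <= D ^ 2).
  { rewrite <- (pow2_abs (t - s)). fold d.
    apply Rmult_le_reg_r with (eps * r ^ 2); [lra |].
    field_simplify; [| lra]. nra. }
  assert (Hbr0 : 0 <= exp T0 * s ^ 2 + c3 * (s + d) * d).
  { assert (0 <= s ^ 2) by apply pow2_ge_0. assert (0 <= (s + d) * d) by nra. unfold c3; nra. }
  apply Rle_trans with ((exp T0 * s ^ 2 + c3 * (s + d) * d) * ((t - s) ^ 2 / (eps * r ^ 2))).
  - unfold Rdiv. rewrite <- Rmult_assoc. apply Rmult_le_compat_r.
    + apply Rlt_le, Rinv_0_lt_compat. lra.
    + apply (fitting_defect_bound s t T0 Hs Ht).
  - apply Rle_trans with (r ^ 2 * (exp T0 * Bm ^ 2 + c3 * (Bm + D) * D) * D ^ 2).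
    + apply Rmult_le_compat; [lra | apply Rdiv_le_0_compat; [apply pow2_ge_0 | lra] | lra | lra].
    + right. unfold c3. ring.
Qed.

(** * Truncation error of the layer function *)

Definition layer (A b0 eps x : R) : R := - A * exp (- b0 * x / eps).

Lemma layer_derive (A b0 eps : R) : 0 < eps ->
  forall x, Derive (layer A b0 eps) x = A * (b0 / eps) * exp (- b0 * x / eps).
Proof. intros He x. apply is_derive_unique. unfold layer. auto_derive; auto. unfold Rdiv. ring. Qed.

Lemma layer_derive2 (A b0 eps : R) : 0 < eps ->
  forall x, Derive_n (layer A b0 eps) 2 x = - A * (b0 / eps) ^ 2 * exp (- b0 * x / eps).
Proof.
  intros He x. change (Derive (Derive (layer A b0 eps)) x = - A * (b0 / eps) ^ 2 * exp (- b0 * x / eps)).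
  rewrite (Derive_ext _ _ x (layer_derive A b0 eps He)).
  apply is_derive_unique. auto_derive; auto. unfold Rdiv. ring.
Qed.

Definition asi_error (eps bi : R) (g : R -> R) (xm x0 xp : R) : R :=
  let Dp := (g xp - g x0) / (xp - x0) in
  let Dm := (g x0 - g xm) / (x0 - xm) in
  - eps * Defs.sigma (bi * (xp - x0) / (2 * eps)) * ((Dp - Dm) / ((x0 - xm + (xp - x0)) / 2))
  - bi * Dp + eps * Derive_n g 2 x0 + bi * Derive g x0.

Lemma tau_asi_error (beta a eps lam : R) (N J : nat) (b g : R -> R) (i : nat) :
  tau beta a eps lam N J b g i
  = asi_error eps (b (mesh beta a eps lam N J i)) g (mesh beta a eps lam N J (i - 1))
      (mesh beta a eps lam N J i) (mesh beta a eps lam N J (S i)).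
Proof. reflexivity. Qed.

Lemma asi_error_layer_uniform (A b0 bi eps h x0 : R) : 0 < eps -> 0 < h -> 0 < bi ->
  asi_error eps bi (layer A b0 eps) (x0 - h) x0 (x0 + h)
  = A * exp (- b0 * x0 / eps)
    * (fitting_defect (bi * (h / eps)) (b0 * (h / eps)) / (eps * (h / eps) ^ 2)).
Proof.
  intros He Hh Hbi. unfold asi_error.
  rewrite layer_derive, layer_derive2 by lra.
  replace (x0 + h - x0) with h by ring. replace (x0 - (x0 - h)) with h by ring.
  rewrite sigma_bernoulli by (apply Rdiv_lt_0_compat; nra).
  replace (2 * (bi * h / (2 * eps))) with (bi * (h / eps)) by (field; lra).
  unfold layer, fitting_defect.
  assert (E1 : exp (- b0 * (x0 + h) / eps) = exp (- b0 * x0 / eps) * exp (- (b0 * (h / eps)))).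
  { rewrite <- exp_plus. f_equal. field. lra. }
  assert (E2 : exp (- b0 * (x0 - h) / eps) = exp (- b0 * x0 / eps) * exp (b0 * (h / eps))).
  { rewrite <- exp_plus. f_equal. field. lra. }
  rewrite E1, E2. field. lra.
Qed.

Definition fitting_defect_coeff (T0 Bm L : R) : R :=
  exp T0 * Bm ^ 2 * L ^ 2 + (2 * exp T0 + 1) * (Bm * L ^ 3 + L ^ 4).

Lemma fitting_defect_coeff_nonneg (T0 Bm L : R) : 0 <= Bm -> 0 <= L -> 0 <= fitting_defect_coeff T0 Bm L.
Proof.
  intros HBm HL. assert (HT := exp_pos T0). unfold fitting_defect_coeff.
  apply Rplus_le_le_0_compat; [repeat apply Rmult_le_pos; try apply pow2_ge_0; lra |].
  apply Rmult_le_pos; [lra |]. apply Rplus_le_le_0_compat; [apply Rmult_le_pos |]; try apply pow_le; lra.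
Qed.

Lemma fitting_defect_poly_le (T0 Bm L y : R) : 0 <= Bm -> 0 <= L -> 0 <= y ->
  exp T0 * Bm ^ 2 * (L * y) ^ 2 + (2 * exp T0 + 1) * (Bm * (L * y) ^ 3 + (L * y) ^ 4)
  <= fitting_defect_coeff T0 Bm L * (1 + y ^ 4).
Proof.
  intros HBm HL Hy. assert (HT := exp_pos T0).
  assert (H2 : y ^ 2 <= 1 + y ^ 4) by nra. assert (H3 : y ^ 3 <= 1 + y ^ 4) by nra.
  assert (K2 : 0 <= exp T0 * Bm ^ 2 * L ^ 2) by (repeat apply Rmult_le_pos; try apply pow2_ge_0; lra).
  assert (K3 : 0 <= (2 * exp T0 + 1) * Bm * L ^ 3) by (repeat apply Rmult_le_pos; try apply pow_le; lra).
  assert (K4 : 0 <= (2 * exp T0 + 1) * L ^ 4) by (apply Rmult_le_pos; [| apply pow_le]; lra).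
  assert (0 <= y ^ 4) by (apply pow_le; lra).
  unfold fitting_defect_coeff. rewrite !Rpow_mult_distr.
  replace (exp T0 * Bm ^ 2 * (L ^ 2 * y ^ 2) + (2 * exp T0 + 1) * (Bm * (L ^ 3 * y ^ 3) + L ^ 4 * y ^ 4))
    with (exp T0 * Bm ^ 2 * L ^ 2 * y ^ 2 + (2 * exp T0 + 1) * Bm * L ^ 3 * y ^ 3
          + (2 * exp T0 + 1) * L ^ 4 * y ^ 4) by ring.
  nra.
Qed.

Lemma layer_poly_decay (b0 beta eps x0 K : R) : 0 < beta < b0 -> 0 < eps -> 0 <= x0 -> 0 <= K ->
  exp (- b0 * x0 / eps) * (K * (1 + (x0 / eps) ^ 4))
  <= K * (1 + 256 / (b0 - beta) ^ 4) * exp (- beta * x0 / eps).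
Proof.
  intros Hb He Hx0 HK. set (y := x0 / eps).
  assert (Hy : 0 <= y) by (apply Rdiv_le_0_compat; lra).
  replace (exp (- b0 * x0 / eps)) with (exp (- ((b0 - beta) * y)) * exp (- beta * x0 / eps))
    by (rewrite <- exp_plus; f_equal; unfold y; field; lra).
  assert (H := one_add_pow4_mul_exp_neg_le (b0 - beta) y ltac:(lra) Hy).
  assert (HE := exp_pos (- beta * x0 / eps)).
  replace (exp (- ((b0 - beta) * y)) * exp (- beta * x0 / eps) * (K * (1 + y ^ 4)))
    with (K * ((1 + y ^ 4) * exp (- ((b0 - beta) * y))) * exp (- beta * x0 / eps)) by ring.
  apply Rmult_le_compat_r; [lra |]. apply Rmult_le_compat_l; lra.
Qed.

Definition layer_fine_const (T0 Bm L dl : R) : R := fitting_defect_coeff T0 Bm L * (1 + 256 / dl ^ 4).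

Lemma asi_error_layer_uniform_bound (A b0 bi eps h x0 beta Bm L T0 : R) :
  0 < eps <= 1 -> 0 < h -> 0 < bi <= Bm -> 0 < beta < b0 -> b0 <= Bm -> 0 <= x0 -> 0 <= L ->
  Rabs (b0 - bi) <= L * x0 -> Bm * (h / eps) <= T0 ->
  Rabs (asi_error eps bi (layer A b0 eps) (x0 - h) x0 (x0 + h))
  <= Rabs A * (h / eps) ^ 2 * layer_fine_const T0 Bm L (b0 - beta) * exp (- beta * x0 / eps).
Proof.
  intros He Hh Hbi Hb Hb0 Hx0 HL Hlip HT0.
  rewrite asi_error_layer_uniform by lra.
  set (r := h / eps) in *. set (y := x0 / eps).
  assert (Hr : 0 < r) by (apply Rdiv_lt_0_compat; lra).
  assert (Hy : 0 <= y) by (apply Rdiv_le_0_compat; lra).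
  assert (Hr2 : 0 < r ^ 2) by (apply pow_lt; lra).
  assert (HD : Rabs (b0 * r - bi * r) <= L * y * eps * r).
  { replace (b0 * r - bi * r) with ((b0 - bi) * r) by ring.
    rewrite Rabs_mult, (Rabs_pos_eq r) by lra. apply Rmult_le_compat_r; [lra |].
    unfold y. replace (L * (x0 / eps) * eps) with (L * x0) by (field; lra). exact Hlip. }
  assert (Hbir : 0 < bi * r <= Bm * r) by (split; [apply Rmult_lt_0_compat | apply Rmult_le_compat_r]; lra).
  assert (Hb0r : 0 < b0 * r <= Bm * r) by (split; [apply Rmult_lt_0_compat | apply Rmult_le_compat_r]; lra).
  assert (Hsc := fitting_defect_scaled_bound eps r (bi * r) (b0 * r) T0 Bm (L * y)
    He Hr ltac:(lra) ltac:(lra) ltac:(lra) ltac:(apply Rmult_le_pos; lra) HD).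
  assert (Hpoly := fitting_defect_poly_le T0 Bm L y ltac:(lra) HL Hy).
  assert (HK := fitting_defect_coeff_nonneg T0 Bm L ltac:(lra) HL).
  unfold layer_fine_const. set (K := fitting_defect_coeff T0 Bm L) in *.
  assert (Hdec := layer_poly_decay b0 beta eps x0 (r ^ 2 * K) Hb ltac:(lra) Hx0
    ltac:(apply Rmult_le_pos; lra)).
  assert (HE := exp_pos (- b0 * x0 / eps)). assert (HA := Rabs_pos A).
  rewrite !Rabs_mult, Rabs_div, (Rabs_pos_eq (exp _)), (Rabs_pos_eq (eps * r ^ 2)) by nra.
  apply Rle_trans with (Rabs A * (exp (- b0 * x0 / eps) * (r ^ 2 * K * (1 + y ^ 4)))).
  - rewrite Rmult_assoc. apply Rmult_le_compat_l; [lra |]. apply Rmult_le_compat_l; [lra |].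
    eapply Rle_trans; [exact Hsc |]. rewrite (Rmult_assoc (r ^ 2)). apply Rmult_le_compat_l; lra.
  - replace (Rabs A * r ^ 2 * (K * (1 + 256 / (b0 - beta) ^ 4)) * exp (- beta * x0 / eps))
      with (Rabs A * (r ^ 2 * K * (1 + 256 / (b0 - beta) ^ 4) * exp (- beta * x0 / eps))) by ring.
    apply Rmult_le_compat_l; [lra | exact Hdec].
Qed.

Lemma layer_diff_quot_bound (A b0 eps x y : R) : 0 < eps -> 0 < b0 -> x < y ->
  let q := (layer A b0 eps y - layer A b0 eps x) / (y - x) in
  Rabs q <= Rabs A * exp (- b0 * x / eps) * (b0 / eps) /\
  Rabs q <= Rabs A * exp (- b0 * x / eps) / (y - x).
Proof.
  intros He Hb Hxy q. set (z := b0 * (y - x) / eps).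
  assert (Hz : 0 <= z) by (apply Rdiv_le_0_compat; nra).
  assert (Hq : q = A * exp (- b0 * x / eps) * ((1 - exp (- z)) / (y - x))).
  { unfold q, layer, z.
    replace (exp (- b0 * y / eps)) with (exp (- b0 * x / eps) * exp (- (b0 * (y - x) / eps)))
      by (rewrite <- exp_plus; f_equal; field; lra).
    field. lra. }
  destruct (one_sub_exp_neg_bounds z Hz) as [H0 H1].
  assert (Hmin := Rmin_l z 1). assert (Hmin' := Rmin_r z 1).
  assert (HE := exp_pos (- b0 * x / eps)). assert (HA := Rabs_pos A).
  rewrite Hq, Rabs_mult, Rabs_mult, (Rabs_pos_eq (exp _)), (Rabs_pos_eq ((1 - exp (- z)) / (y - x))) by
    (try apply Rdiv_le_0_compat; lra).
  split; apply Rmult_le_compat_l; try nra.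
  - apply Rmult_le_reg_r with (y - x); [lra |].
    unfold z in *. field_simplify; lra.
  - apply Rmult_le_reg_r with (y - x); [lra |]. field_simplify; lra.
Qed.

Lemma asi_diffusion_term_bound (eps sig Dp Dm hi hi1 K : R) :
  0 < eps -> 0 <= sig <= 1 -> 0 < hi -> 0 < hi1 -> Rabs Dp <= K -> Rabs Dm <= K ->
  Rabs (- eps * sig * ((Dp - Dm) / ((hi + hi1) / 2))) <= 4 * eps * K / hi1.
Proof.
  intros He Hs Hhi Hhi1 HDp HDm.
  assert (Hd : Rabs (Dp - Dm) <= 2 * K).
  { unfold Rminus. eapply Rle_trans; [apply Rabs_triang |]. rewrite Rabs_Ropp. lra. }
  rewrite Rabs_mult, Rabs_mult, Rabs_Ropp, (Rabs_pos_eq eps), (Rabs_pos_eq sig), Rabs_div,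
    (Rabs_pos_eq ((hi + hi1) / 2)) by lra.
  assert (0 <= Rabs (Dp - Dm)) by apply Rabs_pos.
  apply Rle_trans with (eps * (2 * K / ((hi + hi1) / 2))).
  - rewrite Rmult_assoc. apply Rmult_le_compat_l; [lra |].
    apply Rle_trans with (1 * (Rabs (Dp - Dm) / ((hi + hi1) / 2))).
    + apply Rmult_le_compat_r; [apply Rdiv_le_0_compat |]; lra.
    + rewrite Rmult_1_l. apply Rmult_le_compat_r; [apply Rlt_le, Rinv_0_lt_compat |]; lra.
  - apply Rmult_le_reg_r with ((hi + hi1) / 2 * hi1); [nra |].
    field_simplify; try lra. assert (0 <= K) by (assert (HK := Rabs_pos Dp); lra).
    assert (0 <= eps * K * hi) by (repeat apply Rmult_le_pos; lra). lra.
Qed.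

(* - eps v'' - b(0) v' = 0 for the layer v, so only b(x0) - b(0) survives. *)
Lemma layer_residual_bound (A b0 bi eps x0 L : R) : 0 < eps -> 0 < b0 ->
  Rabs (bi - b0) <= L * x0 ->
  Rabs (eps * (- A * (b0 / eps) ^ 2 * exp (- b0 * x0 / eps)) + bi * (A * (b0 / eps) * exp (- b0 * x0 / eps)))
  <= Rabs A * (b0 * L * (x0 / eps) * exp (- b0 * x0 / eps)).
Proof.
  intros He Hb0 Hlip. set (e0 := exp (- b0 * x0 / eps)). assert (He0 : 0 < e0) by apply exp_pos.
  replace (eps * (- A * (b0 / eps) ^ 2 * e0) + bi * (A * (b0 / eps) * e0))
    with (A * (e0 * (b0 / eps) * (bi - b0))) by (field; lra).
  assert (Hbe : 0 <= e0 * (b0 / eps)) by (apply Rmult_le_pos; [lra | apply Rdiv_le_0_compat; lra]).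
  rewrite Rabs_mult. apply Rmult_le_compat_l; [apply Rabs_pos |].
  rewrite Rabs_mult, (Rabs_pos_eq (e0 * _)) by exact Hbe.
  replace (b0 * L * (x0 / eps) * e0) with (e0 * (b0 / eps) * (L * x0)) by (field; lra).
  apply Rmult_le_compat_l; lra.
Qed.

Lemma asi_error_layer_bound (A b0 bi eps xm x0 xp Bm L : R) :
  0 < eps -> 0 < b0 -> 0 < bi <= Bm -> xm < x0 < xp -> Rabs (bi - b0) <= L * x0 ->
  Rabs (asi_error eps bi (layer A b0 eps) xm x0 xp)
  <= Rabs A * ((4 * b0 + Bm) * exp (- b0 * xm / eps) / (xp - x0)
               + b0 * L * (x0 / eps) * exp (- b0 * x0 / eps)).
Proof.
  intros He Hb0 Hbi Hx Hlip. unfold asi_error.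
  rewrite layer_derive, layer_derive2 by lra.
  set (em := exp (- b0 * xm / eps)). set (e0 := exp (- b0 * x0 / eps)).
  assert (He0 : 0 < e0) by apply exp_pos.
  assert (Hle : e0 <= em) by (apply exp_le_compat; unfold Rdiv; apply Rmult_le_compat_r;
    [apply Rlt_le, Rinv_0_lt_compat |]; nra).
  assert (HA := Rabs_pos A).
  destruct (layer_diff_quot_bound A b0 eps x0 xp He Hb0 ltac:(lra)) as [Hp1 Hp2].
  destruct (layer_diff_quot_bound A b0 eps xm x0 He Hb0 ltac:(lra)) as [Hm1 _].
  fold e0 em in Hp1, Hp2, Hm1.
  set (Dp := (layer A b0 eps xp - layer A b0 eps x0) / (xp - x0)) in *.
  set (Dm := (layer A b0 eps x0 - layer A b0 eps xm) / (x0 - xm)) in *.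
  assert (Hbe : 0 <= b0 / eps) by (apply Rdiv_le_0_compat; lra).
  assert (Hp1' : Rabs Dp <= Rabs A * em * (b0 / eps)).
  { eapply Rle_trans; [exact Hp1 |]. apply Rmult_le_compat_r; [| apply Rmult_le_compat_l]; lra. }
  assert (Hp2' : Rabs Dp <= Rabs A * em / (xp - x0)).
  { eapply Rle_trans; [exact Hp2 |]. unfold Rdiv.
    apply Rmult_le_compat_r; [apply Rlt_le, Rinv_0_lt_compat |]; nra. }
  assert (Hsig : 0 <= Defs.sigma (bi * (xp - x0) / (2 * eps)) <= 1)
    by (apply sigma_bounds, Rdiv_lt_0_compat; nra).
  assert (T1 := asi_diffusion_term_bound eps _ Dp Dm (x0 - xm) (xp - x0) (Rabs A * em * (b0 / eps))
    He Hsig ltac:(lra) ltac:(lra) Hp1' Hm1).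
  assert (T2 : Rabs (bi * Dp) <= Bm * (Rabs A * em / (xp - x0))).
  { rewrite Rabs_mult, (Rabs_pos_eq bi) by lra. apply Rmult_le_compat; try lra. apply Rabs_pos. }
  assert (T3 := layer_residual_bound A b0 bi eps x0 L He Hb0 Hlip). fold e0 in T3.
  replace (4 * eps * (Rabs A * em * (b0 / eps)) / (xp - x0))
    with (4 * b0 * (Rabs A * em / (xp - x0))) in T1 by (field; lra).
  match goal with |- Rabs (?t1 - ?t2 + ?t3 + ?t4) <= _ =>
    replace (t1 - t2 + t3 + t4) with (t1 + - t2 + (t3 + t4)) by ring end.
  eapply Rle_trans; [apply Rabs_triang |]. eapply Rle_trans; [apply Rplus_le_compat_r, Rabs_triang |].
  rewrite Rabs_Ropp.
  replace (Rabs A * ((4 * b0 + Bm) * em / (xp - x0) + b0 * L * (x0 / eps) * e0))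
    with (4 * b0 * (Rabs A * em / (xp - x0)) + Bm * (Rabs A * em / (xp - x0))
          + Rabs A * (b0 * L * (x0 / eps) * e0)) by (field; lra).
  lra.
Qed.

(** * A priori bounds for the solution *)

Lemma is_derive_neg_right (p : R -> R) (m l : R) : is_derive p m l -> l < 0 -> p m = 0 ->
  exists del, 0 < del /\ forall z, m < z < m + del -> p z < 0.
Proof.
  intros Hd Hl Hp. apply is_derive_Reals in Hd.
  destruct (Hd (- l / 2) ltac:(lra)) as [del Hdel].
  exists del. split; [apply cond_pos |]. intros z Hz.
  assert (H := Hdel (z - m) ltac:(lra)).
  rewrite Rabs_pos_eq in H by lra. replace (m + (z - m)) with z in H by ring.
  rewrite Hp in H. specialize (H ltac:(lra)).
  assert (Hq : p z / (z - m) < l / 2) by (apply Rabs_def2 in H; lra).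
  apply Rmult_lt_compat_r with (r := z - m) in Hq; [| lra].
  field_simplify in Hq; [| lra]. nra.
Qed.

Lemma interior_min_deriv (w w1 : R -> R) (m l a b : R) :
  a < m < b -> (forall x, a < x < b -> w m <= w x) ->
  (forall x, a < x < b -> is_derive w x (w1 x)) -> is_derive w1 m l ->
  w1 m = 0 /\ 0 <= l.
Proof.
  intros Hm Hmin Hw Hw1.
  assert (H0 : w1 m = 0).
  { assert (Hd := proj1 (is_derive_Reals _ _ _) (Hw m Hm)).
    exact (deriv_minimum w a b m (exist _ (w1 m) Hd) ltac:(lra) ltac:(lra)
      (fun x h1 h2 => Hmin x (conj h1 h2))). }
  split; [exact H0 |]. destruct (Rle_lt_dec 0 l) as [Hl | Hl]; [exact Hl | exfalso].
  destruct (is_derive_neg_right w1 m l Hw1 Hl H0) as [del [Hdel Hneg]].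
  set (y := m + Rmin del (b - m) / 2).
  assert (Hy : m < y < m + del /\ y < b) by (unfold y, Rmin; destruct Rle_dec; lra).
  destruct (MVT_cor2 w w1 m y ltac:(lra)) as [z [Hz Hzr]].
  { intros z Hz. apply (is_derive_Reals w z (w1 z)), Hw. lra. }
  assert (w1 z < 0) by (apply Hneg; lra).
  assert (w m <= w y) by (apply Hmin; lra).
  nra.
Qed.

Lemma barrier_curvature_pos (eps bm cm fm u0 u1 u2 beta Fm K sgn : R) :
  0 < eps -> beta < bm -> 0 <= cm -> Rabs fm <= Fm -> beta * K = Fm + 1 -> 0 < K ->
  sgn = 1 \/ sgn = -1 -> sgn * u1 = - K -> 0 <= sgn * u0 ->
  - eps * u2 - bm * u1 + cm * u0 = fm -> 0 < sgn * u2.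
Proof.
  intros He Hb Hc Hf HK HK0 Hsg Hu1 Hu0 Hode.
  assert (Hsf : sgn * fm <= Fm).
  { assert (H := Rle_abs fm). assert (H' := Rle_abs (- fm)). rewrite Rabs_Ropp in H'.
    destruct Hsg; subst; lra. }
  assert (Hflux : eps * (sgn * u2) = bm * K + cm * (sgn * u0) - sgn * fm).
  { replace (bm * K) with (- bm * (sgn * u1)) by (rewrite Hu1; ring).
    replace (eps * (sgn * u2)) with (sgn * (eps * u2)) by ring.
    replace (eps * u2) with (cm * u0 - fm - bm * u1) by lra. ring. }
  assert (0 <= cm * (sgn * u0)) by nra. assert (beta * K < bm * K) by nra.
  nra.
Qed.

Lemma solution_le_barrier (eps : R) (b c f u : R -> R) (beta Fm sgn : R) :
  0 < eps -> 0 < beta ->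
  (forall x, 0 <= x <= 1 -> beta < b x) -> (forall x, 0 <= x <= 1 -> 0 <= c x) ->
  (forall x, 0 <= x <= 1 -> Rabs (f x) <= Fm) -> is_solution eps b c f u -> sgn = 1 \/ sgn = -1 ->
  forall x, 0 <= x <= 1 -> sgn * u x <= (Fm + 1) / beta * (2 - x).
Proof.
  intros He Hb Hbb Hcc Hff [Hd [_ [Hode [Hu0 Hu1]]]] Hsg.
  assert (HFm : 0 <= Fm) by (assert (H := Hff 0 ltac:(lra)); assert (H' := Rabs_pos (f 0)); lra).
  set (K := (Fm + 1) / beta).
  assert (HK : beta * K = Fm + 1) by (unfold K; field; lra).
  assert (HK0 : 0 < K) by (unfold K; apply Rdiv_lt_0_compat; lra).
  set (w := fun x => K * (2 - x) - sgn * u x).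
  set (w1 := fun z => - K - sgn * Derive u z).
  assert (Dw : forall x, 0 <= x <= 1 -> is_derive w x (w1 x)).
  { intros x Hx. unfold w, w1. auto_derive; [apply Hd; auto |].
    change (Derive (fun y => u y) x) with (Derive u x). ring. }
  assert (Cw : forall x, 0 <= x <= 1 -> continuity_pt w x).
  { intros x Hx. apply continuity_pt_filterlim, continuous_of_ex_derive.
    exists (w1 x). apply Dw, Hx. }
  destruct (continuity_ab_min w 0 1 ltac:(lra) Cw) as [m [Hmin Hm]].
  intros x Hx. enough (0 <= w x) by (unfold w in *; lra).
  destruct (Rle_dec 0 (w m)) as [Hpos | Hneg]; [specialize (Hmin x Hx); lra | exfalso].
  apply Rnot_le_lt in Hneg.
  assert (Hmo : 0 < m < 1).
  { unfold w in Hneg. destruct Hm as [[Hm0 | <-] [Hm1 | ->]]; try rewrite Hu0 in Hneg;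
      try rewrite Hu1 in Hneg; lra. }
  assert (Dw1 : is_derive w1 m (- sgn * Derive_n u 2 m)).
  { unfold w1. change (Derive_n u 2 m) with (Derive (Derive u) m).
    auto_derive; [apply Hd; lra |].
    change (Derive (fun y => Derive u y) m) with (Derive (Derive u) m). ring. }
  destruct (interior_min_deriv w w1 m _ 0 1 Hmo (fun y Hy => Hmin y ltac:(lra))
    (fun y Hy => Dw y ltac:(lra)) Dw1) as [Hw1 Hw2].
  unfold w1 in Hw1. unfold w in Hneg.
  assert (Hpos := barrier_curvature_pos eps (b m) (c m) (f m) (u m) (Derive u m) (Derive_n u 2 m)
    beta Fm K sgn He (Hbb m ltac:(lra)) (Hcc m ltac:(lra)) (Hff m ltac:(lra)) HK HK0 Hsg
    ltac:(lra) ltac:(nra) (Hode m Hmo)).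
  nra.
Qed.

Lemma solution_abs_le (eps : R) (b c f u : R -> R) (beta Fm : R) :
  0 < eps -> 0 < beta ->
  (forall x, 0 <= x <= 1 -> beta < b x) -> (forall x, 0 <= x <= 1 -> 0 <= c x) ->
  (forall x, 0 <= x <= 1 -> Rabs (f x) <= Fm) -> is_solution eps b c f u ->
  forall x, 0 <= x <= 1 -> Rabs (u x) <= 2 * ((Fm + 1) / beta).
Proof.
  intros He Hb Hbb Hcc Hff Hs x Hx.
  assert (H1 := solution_le_barrier eps b c f u beta Fm 1 He Hb Hbb Hcc Hff Hs (or_introl eq_refl) x Hx).
  assert (H2 := solution_le_barrier eps b c f u beta Fm (-1) He Hb Hbb Hcc Hff Hs (or_intror eq_refl) x Hx).
  assert (HFm : 0 <= Fm) by (assert (H := Hff 0 ltac:(lra)); assert (H' := Rabs_pos (f 0)); lra).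
  assert (0 < (Fm + 1) / beta) by (apply Rdiv_lt_0_compat; lra).
  apply Rabs_le. split; nra.
Qed.

Lemma solution_flux_derive (eps : R) (b c f u : R -> R) (x : R) :
  is_solution eps b c f u -> ex_derive b x -> 0 < x < 1 ->
  is_derive (fun y => eps * Derive u y + b y * u y) x (c x * u x - f x + Derive b x * u x).
Proof.
  intros [Hd [_ [Hode _]]] Hb Hx.
  assert (Ho := Hode x Hx). change (Derive_n u 2 x) with (Derive (Derive u) x) in Ho.
  auto_derive; [repeat split; try apply Hd; auto; lra |].
  change (Derive (fun y => Derive u y) x) with (Derive (Derive u) x).
  change (Derive (fun y => u y) x) with (Derive u x).
  change (Derive (fun y => b y) x) with (Derive b x). lra.
Qed.

Lemma flux_source_bound (cx ux fx dx Cm M Fm L : R) :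
  Rabs cx <= Cm -> Rabs ux <= M -> Rabs fx <= Fm -> Rabs dx <= L ->
  Rabs (cx * ux - fx + dx * ux) <= Cm * M + Fm + L * M.
Proof.
  intros Hc Hu Hf Hd. unfold Rminus.
  eapply Rle_trans; [apply Rabs_triang |]. eapply Rle_trans; [apply Rplus_le_compat_r, Rabs_triang |].
  rewrite Rabs_Ropp, !Rabs_mult.
  assert (Rabs cx * Rabs ux <= Cm * M) by (apply Rmult_le_compat; auto using Rabs_pos).
  assert (Rabs dx * Rabs ux <= L * M) by (apply Rmult_le_compat; auto using Rabs_pos).
  lra.
Qed.

Lemma solution_flux_at_0_bound (eps : R) (b c f u : R -> R) (Bm L Cm Fm M : R) :
  0 < eps < 1 -> is_solution eps b c f u -> (forall x, 0 <= x <= 1 -> ex_derive b x) ->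
  (forall x, 0 <= x <= 1 -> Rabs (b x) <= Bm) ->
  (forall x, 0 <= x <= 1 -> Rabs (Derive b x) <= L) ->
  (forall x, 0 <= x <= 1 -> Rabs (c x) <= Cm) ->
  (forall x, 0 <= x <= 1 -> Rabs (f x) <= Fm) ->
  (forall x, 0 <= x <= 1 -> Rabs (u x) <= M) ->
  Rabs (eps * Derive u 0) <= M + Bm * M + (Cm * M + Fm + L * M).
Proof.
  intros He Hs Hdb HB HL HC HF HM. pose proof Hs as [Hd [_ [_ [Hu0 _]]]].
  assert (Hsrc : forall x, 0 <= x <= 1 ->
    Rabs (c x * u x - f x + Derive b x * u x) <= Cm * M + Fm + L * M)
    by (intros x Hx; apply flux_source_bound; auto).
  assert (HK := Rle_trans _ _ _ (Rabs_pos _) (Hsrc 0 ltac:(lra))).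
  (* eps u'(x1) = u(eps) for some x1 in (0, eps): the flux at 0 is compared with the flux at x1. *)
  destruct (MVT_gen u 0 eps (Derive u)) as [x1 [Hx1 Hx1e]].
  { intros x Hx. rewrite Rmin_left, Rmax_right in Hx by lra. apply Derive_correct, Hd. lra. }
  { intros x Hx. rewrite Rmin_left, Rmax_right in Hx by lra.
    apply continuity_pt_filterlim, continuous_of_ex_derive, Hd. lra. }
  rewrite Rmin_left, Rmax_right in Hx1 by lra. rewrite Hu0, Rminus_0_r, Rminus_0_r in Hx1e.
  set (Phi := fun y => eps * Derive u y + b y * u y).
  assert (Hflux : Rabs (Phi x1 - Phi 0) <= (Cm * M + Fm + L * M) * Rabs (x1 - 0)).
  { apply (mvt_abs_le Phi (fun x => c x * u x - f x + Derive b x * u x));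
      rewrite ?Rmin_left, ?Rmax_right by lra; intros x Hx.
    - apply solution_flux_derive; [exact Hs | apply Hdb; lra | lra].
    - apply continuous_of_ex_derive. unfold Phi. auto_derive. repeat split; try apply Hd; try apply Hdb; lra.
    - apply Hsrc. lra. }
  rewrite Rabs_pos_eq with (x := x1 - 0) in Hflux by lra.
  assert (Hbu : Rabs (b x1 * u x1) <= Bm * M)
    by (rewrite Rabs_mult; apply Rmult_le_compat; auto using Rabs_pos; [apply HB | apply HM]; lra).
  assert (Hue := HM eps ltac:(lra)).
  replace (eps * Derive u 0) with (u eps + b x1 * u x1 - (Phi x1 - Phi 0))
    by (unfold Phi; rewrite Hu0; lra).
  unfold Rminus at 1. eapply Rle_trans; [apply Rabs_triang |]. rewrite Rabs_Ropp.
  eapply Rle_trans; [apply Rplus_le_compat_r, Rabs_triang |]. nra.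
Qed.

(** * The Shishkin mesh *)

Lemma mesh_le (beta a eps lam : R) (N J i : nat) : (i <= J)%nat ->
  mesh beta a eps lam N J i = INR i * (xi beta a eps lam / INR J).
Proof. intros H. unfold mesh. cbv zeta. rewrite (proj2 (Nat.leb_le i J) H). reflexivity. Qed.

Lemma mesh_ge (beta a eps lam : R) (N J i : nat) : (0 < J)%nat -> (J <= i)%nat ->
  mesh beta a eps lam N J i
  = xi beta a eps lam + (INR i - INR J) * ((1 - xi beta a eps lam) / (INR N - INR J)).
Proof.
  intros HJ H. destruct (Nat.eq_dec i J) as [-> | Hn].
  - rewrite mesh_le by lia. assert (0 < INR J) by (apply lt_0_INR; lia).
    rewrite Rminus_diag, Rmult_0_l, Rplus_0_r. field. lra.
  - unfold mesh. cbv zeta. destruct (Nat.leb_spec i J); [lia | reflexivity].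
Qed.

Lemma shishkin_indices (Q : R) (N J : nat) : 0 < Q < 1 -> (0 < N)%nat -> INR J = Q * INR N ->
  (0 < J)%nat /\ (J < N)%nat.
Proof.
  intros HQ HN HJ. assert (HNr : 0 < INR N) by (apply lt_0_INR; lia).
  split; apply INR_lt; simpl; nra.
Qed.

Lemma fine_step_over_eps (beta a Q eps : R) (N J : nat) : 0 < beta -> 0 < eps -> 0 < Q ->
  (0 < N)%nat -> INR J = Q * INR N ->
  xi beta a eps (INR N) / INR J / eps = a / (beta * Q) * (ln (INR N) / INR N).
Proof.
  intros Hb He HQ HN HJ. assert (0 < INR N) by (apply lt_0_INR; lia).
  unfold xi. rewrite HJ. field. repeat split; lra.
Qed.

Lemma coarse_step_bounds (Q x1 H : R) (N J : nat) : 0 < Q < 1 -> (0 < N)%nat -> INR J = Q * INR N ->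
  x1 <= Q -> H = (1 - x1) / (INR N - INR J) -> 0 < H /\ / H <= INR N.
Proof.
  intros HQ HN HJ Hx1 ->. assert (0 < INR N) by (apply lt_0_INR; lia).
  rewrite HJ. split; [apply Rdiv_lt_0_compat; nra |].
  rewrite Rinv_div. apply Rmult_le_reg_r with (1 - x1); [lra |].
  unfold Rdiv. rewrite Rmult_assoc, Rinv_l by lra. nra.
Qed.

Lemma mesh_fine_neighbours (beta a eps lam h : R) (N J i : nat) :
  h = xi beta a eps lam / INR J -> (1 <= i <= J - 1)%nat ->
  mesh beta a eps lam N J (i - 1) = mesh beta a eps lam N J i - h /\
  mesh beta a eps lam N J (S i) = mesh beta a eps lam N J i + h.
Proof.
  intros Hh Hi. rewrite !mesh_le, <- Hh by lia.
  rewrite (S_INR i), minus_INR by lia. change (INR 1) with 1. split; ring.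
Qed.

Lemma mesh_coarse_neighbours (beta a eps lam h H : R) (N J i : nat) :
  h = xi beta a eps lam / INR J -> H = (1 - xi beta a eps lam) / (INR N - INR J) ->
  (0 < J)%nat -> (J < N)%nat -> (J <= i <= N - 1)%nat -> 0 < xi beta a eps lam < 1 ->
  mesh beta a eps lam N J (S i) = mesh beta a eps lam N J i + H /\
  xi beta a eps lam <= mesh beta a eps lam N J i <= 1 - H /\
  xi beta a eps lam - h <= mesh beta a eps lam N J (i - 1) < mesh beta a eps lam N J i.
Proof.
  intros Hh HH HJ HJN Hi Hxi. set (x0 := xi beta a eps lam) in *.
  assert (HJr : 0 < INR J) by (apply lt_0_INR; lia).
  assert (HNJ : INR J < INR N) by (apply lt_INR; lia).
  assert (HHp : 0 < H) by (rewrite HH; apply Rdiv_lt_0_compat; lra).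
  assert (Hhp : 0 < h) by (rewrite Hh; apply Rdiv_lt_0_compat; lra).
  assert (HNH : (INR N - INR J) * H = 1 - x0) by (rewrite HH; field; lra).
  rewrite (mesh_ge _ _ _ _ N J i), (mesh_ge _ _ _ _ N J (S i)) by lia. fold x0. rewrite <- HH.
  assert (Hi0 : INR J <= INR i) by (apply le_INR; lia).
  assert (Hi1 : INR i <= INR N - 1).
  { replace (INR N - 1) with (INR (N - 1)) by (rewrite minus_INR by lia; reflexivity).
    apply le_INR; lia. }
  assert (0 <= (INR i - INR J) * H) by (apply Rmult_le_pos; lra).
  assert ((INR i - INR J) * H <= (INR N - 1 - INR J) * H) by (apply Rmult_le_compat_r; lra).
  split; [rewrite S_INR; ring |]. split; [nra |].
  destruct (Nat.eq_dec i J) as [-> | Hn].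
  - rewrite mesh_le by lia. fold x0. rewrite minus_INR by lia. change (INR 1) with 1.
    replace ((INR J - 1) * (x0 / INR J)) with (x0 - h) by (rewrite Hh; field; lra).
    rewrite Rminus_diag, Rmult_0_l. lra.
  - rewrite mesh_ge by lia. fold x0. rewrite <- HH, minus_INR by lia. change (INR 1) with 1.
    assert (INR J <= INR i - 1).
    { replace (INR i - 1) with (INR (i - 1)) by (rewrite minus_INR by lia; reflexivity).
      apply le_INR; lia. }
    assert (0 <= (INR i - 1 - INR J) * H) by (apply Rmult_le_pos; lra). nra.
Qed.

Lemma layer_past_transition (beta a eps N x : R) : 0 < beta -> 0 < eps -> 0 < N ->
  xi beta a eps N <= x -> exp (- beta * x / eps) <= Rpower N (- a).
Proof.
  intros Hb He HN Hx. unfold Rpower. apply exp_le_compat. unfold xi in Hx.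
  apply Rmult_le_reg_r with (eps / beta); [apply Rdiv_lt_0_compat; lra |].
  replace (- beta * x / eps * (eps / beta)) with (- x) by (field; lra).
  replace (- a * ln N * (eps / beta)) with (- (a * eps / beta * ln N)) by (field; lra). lra.
Qed.

Lemma layer_weight_past_transition (beta b0 a eps N x : R) : 0 < beta < b0 -> 0 < eps -> 0 < N ->
  0 <= x -> xi beta a eps N <= x ->
  x / eps * exp (- b0 * x / eps) <= / (b0 - beta) * Rpower N (- a).
Proof.
  intros Hb He HN Hx0 Hx. set (y := x / eps).
  assert (Hy : 0 <= y) by (apply Rdiv_le_0_compat; lra).
  replace (exp (- b0 * x / eps)) with (exp (- ((b0 - beta) * y)) * exp (- beta * x / eps))
    by (rewrite <- exp_plus; f_equal; unfold y; field; lra).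
  assert (H1 := mul_exp_neg_le (b0 - beta) y ltac:(lra)).
  assert (H2 := layer_past_transition beta a eps N x ltac:(lra) He HN Hx).
  assert (0 < exp (- beta * x / eps)) by apply exp_pos.
  rewrite <- Rmult_assoc. apply Rmult_le_compat; try lra.
  apply Rmult_le_pos; [lra | apply Rlt_le, exp_pos].
Qed.

(* This is where the condition a >= beta / (b(0) - beta) on the transition point enters. *)
Lemma layer_across_transition_le (beta b0 a eps N h H xm r0 : R) :
  0 < beta < b0 -> 0 < eps -> 1 <= N -> beta <= a * (b0 - beta) ->
  0 < H -> / H <= N -> xi beta a eps N - h <= xm -> h / eps <= r0 ->
  exp (- b0 * xm / eps) / H <= exp (b0 * r0) * Rpower N (- a).
Proof.
  intros Hb He HN Ha HH HHN Hxm Hh.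
  assert (Hln : 0 <= ln N) by (rewrite <- ln_1; destruct (Req_dec N 1) as [-> | Hn];
    [lra | left; apply ln_increasing; lra]).
  assert (E1 : exp (- b0 * xm / eps) <= exp (- b0 * (xi beta a eps N - h) / eps)).
  { apply exp_le_compat. unfold Rdiv. apply Rmult_le_compat_r; [apply Rlt_le, Rinv_0_lt_compat |]; nra. }
  assert (E2 : exp (- b0 * (xi beta a eps N - h) / eps) * N <= exp (b0 * r0) * Rpower N (- a)).
  { unfold Rpower, xi. rewrite <- (exp_ln N) at 2 by lra. rewrite <- !exp_plus. apply exp_le_compat.
    replace (- b0 * (a * eps / beta * ln N - h) / eps + ln N)
      with (b0 * (h / eps) - (a * b0 / beta - 1) * ln N) by (field; lra).
    assert (a <= a * b0 / beta - 1) by (apply Rmult_le_reg_r with beta; [lra | field_simplify; lra]).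
    assert (b0 * (h / eps) <= b0 * r0) by (apply Rmult_le_compat_l; lra).
    nra. }
  assert (0 < exp (- b0 * xm / eps)) by apply exp_pos.
  unfold Rdiv. eapply Rle_trans; [| exact E2].
  apply Rmult_le_compat; try lra. apply Rlt_le, Rinv_0_lt_compat. lra.
Qed.

(* [a / (beta Q)] bounds the scaled fine step [h / eps = a ln N / (beta Q N)]. *)
Definition shishkin_fine_const (b0 beta a Q Bm L : R) : R :=
  (a / (beta * Q)) ^ 2 * layer_fine_const (Bm * (a / (beta * Q))) Bm L (b0 - beta).

Definition shishkin_coarse_const (b0 beta a Q Bm L : R) : R :=
  (4 * b0 + Bm) * exp (b0 * (a / (beta * Q))) + b0 * L / (b0 - beta).

Section ShishkinLayer.

Variables (b : R -> R) (beta a Q Bm L : R).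
Hypothesis Hbeta : 0 < beta.
Hypothesis Hb : forall x, 0 <= x <= 1 -> beta < b x <= Bm.
Hypothesis Hlip : forall x, 0 <= x <= 1 -> Rabs (b x - b 0) <= L * x.
Hypothesis HL : 0 <= L.
Hypothesis HQ : 0 < Q < 1.
Hypothesis Ha : a >= beta / (b 0 - beta).

Let r0 := a / (beta * Q).

Lemma shishkin_transition_condition : beta <= a * (b 0 - beta).
Proof.
  assert (H0 := Hb 0 ltac:(lra)). apply Rge_le in Ha.
  apply Rmult_le_reg_r with (/ (b 0 - beta)); [apply Rinv_0_lt_compat; lra |].
  rewrite Rmult_assoc, Rinv_r by lra. lra.
Qed.

Lemma shishkin_params_pos : beta < b 0 <= Bm /\ 0 < a /\ 0 < r0.
Proof.
  assert (H0 := Hb 0 ltac:(lra)). assert (H1 := shishkin_transition_condition).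
  assert (0 < a) by nra. repeat split; try lra. apply Rdiv_lt_0_compat; nra.
Qed.

Lemma shishkin_fine_step (eps : R) (N J : nat) :
  0 < eps -> (0 < N)%nat -> INR J = Q * INR N ->
  2 <= INR N /\ 0 < ln (INR N) /\ 0 < xi beta a eps (INR N) / INR J /\
  xi beta a eps (INR N) / INR J / eps = r0 * (ln (INR N) / INR N) /\
  xi beta a eps (INR N) / INR J / eps <= r0.
Proof.
  intros He HN HJ. destruct shishkin_params_pos as [Hb0 [Ha0 Hr0]].
  destruct (shishkin_indices Q N J HQ HN HJ) as [HJ0 HJN].
  assert (HN2 : 2 <= INR N) by (change 2 with (INR 2); apply le_INR; lia).
  assert (Hln : 0 < ln (INR N)) by (rewrite <- ln_1; apply ln_increasing; lra).
  assert (Hhe := fine_step_over_eps beta a Q eps N J Hbeta He ltac:(lra) HN HJ). fold r0 in Hhe.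
  assert (Hq : 0 < ln (INR N) / INR N <= 1).
  { split; [apply Rdiv_lt_0_compat; lra |].
    apply Rmult_le_reg_r with (INR N); [lra |]. field_simplify; [apply ln_le_id |]; lra. }
  assert (0 < xi beta a eps (INR N) / INR J / eps) by (rewrite Hhe; apply Rmult_lt_0_compat; lra).
  repeat split; try lra.
  - apply Rmult_lt_reg_r with (/ eps); [apply Rinv_0_lt_compat; lra |]. lra.
  - rewrite Hhe. rewrite <- (Rmult_1_r r0) at 2. apply Rmult_le_compat_l; lra.
Qed.

Lemma shishkin_consts_nonneg :
  0 <= shishkin_fine_const (b 0) beta a Q Bm L /\ 0 <= shishkin_coarse_const (b 0) beta a Q Bm L.
Proof.
  destruct shishkin_params_pos as [Hb0 [Ha0 Hr0]]. fold r0.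
  assert (HT := exp_pos (Bm * r0)). assert (He0 := exp_pos (b 0 * r0)).
  assert (Hdl : 0 < (b 0 - beta) ^ 4) by (apply pow_lt; lra).
  unfold shishkin_fine_const, shishkin_coarse_const, layer_fine_const. fold r0. split.
  - assert (0 <= 256 / (b 0 - beta) ^ 4) by (apply Rdiv_le_0_compat; lra).
    apply Rmult_le_pos; [apply pow2_ge_0 |]. apply Rmult_le_pos; [| lra].
    apply Rplus_le_le_0_compat; [repeat apply Rmult_le_pos; try apply pow2_ge_0; lra |].
    apply Rmult_le_pos; [lra |].
    apply Rplus_le_le_0_compat; [apply Rmult_le_pos |]; try apply pow_le; lra.
  - apply Rplus_le_le_0_compat; [apply Rmult_le_pos; lra |].
    apply Rdiv_le_0_compat; [apply Rmult_le_pos |]; lra.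
Qed.

Lemma tau_layer_fine (A eps : R) (N J i : nat) :
  0 < eps < 1 -> (0 < N)%nat -> INR J = Q * INR N -> xi beta a eps (INR N) <= Q ->
  (1 <= i <= J - 1)%nat ->
  Rabs (tau beta a eps (INR N) N J b (layer A (b 0) eps) i)
  <= Rabs A * shishkin_fine_const (b 0) beta a Q Bm L * / INR N ^ 2 * ln (INR N) ^ 2
     * exp (- beta * mesh beta a eps (INR N) N J i / eps).
Proof.
  intros He HN HJ Hxi Hi. destruct shishkin_params_pos as [Hb0 [Ha0 Hr0]].
  destruct (shishkin_fine_step eps N J ltac:(lra) HN HJ) as [HN2 [Hln [Hh [Hhe Hhr]]]].
  set (h := xi beta a eps (INR N) / INR J) in *.
  destruct (mesh_fine_neighbours beta a eps (INR N) h N J i eq_refl Hi) as [Hm Hp].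
  set (x0 := mesh beta a eps (INR N) N J i) in *.
  assert (Hx0 : 0 <= x0 <= 1).
  { unfold x0. rewrite mesh_le by lia. fold h.
    assert (INR i <= INR J) by (apply le_INR; lia).
    assert (INR J * h <= Q) by (unfold h; field_simplify; [lra | apply not_0_INR; lia]).
    split; [apply Rmult_le_pos; [apply pos_INR | lra] | nra]. }
  destruct (Hb x0 Hx0) as [Hbx Hbx'].
  rewrite tau_asi_error, Hm, Hp. fold x0.
  eapply Rle_trans; [apply (asi_error_layer_uniform_bound A (b 0) (b x0) eps h x0 beta Bm L (Bm * r0));
    try lra |].
  - rewrite Rabs_minus_sym. apply Hlip, Hx0.
  - apply Rmult_le_compat_l; lra.
  - rewrite Hhe. unfold shishkin_fine_const. fold r0. right. field. lra.
Qed.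

Lemma tau_layer_coarse (A eps : R) (N J i : nat) :
  0 < eps < 1 -> (0 < N)%nat -> INR J = Q * INR N -> xi beta a eps (INR N) <= Q ->
  (J <= i <= N - 1)%nat ->
  Rabs (tau beta a eps (INR N) N J b (layer A (b 0) eps) i)
  <= Rabs A * shishkin_coarse_const (b 0) beta a Q Bm L * Rpower (INR N) (- a).
Proof.
  intros He HN HJ Hxi Hi. destruct shishkin_params_pos as [Hb0 [Ha0 Hr0]].
  destruct (shishkin_fine_step eps N J ltac:(lra) HN HJ) as [HN2 [Hln [Hh [_ Hhr]]]].
  destruct (shishkin_indices Q N J HQ HN HJ) as [HJ0 HJN].
  set (x1 := xi beta a eps (INR N)) in *. set (h := x1 / INR J) in *.
  set (H := (1 - x1) / (INR N - INR J)).
  assert (HJr : 0 < INR J) by (apply lt_0_INR; lia).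
  assert (Hx1 : 0 < x1) by (replace x1 with (h * INR J) by (unfold h; field; lra);
    apply Rmult_lt_0_compat; lra).
  destruct (mesh_coarse_neighbours beta a eps (INR N) h H N J i eq_refl eq_refl HJ0 HJN Hi
    ltac:(fold x1; lra)) as [Hp [Hx0 [Hxm Hxm']]]. fold x1 in Hx0, Hxm.
  set (x0 := mesh beta a eps (INR N) N J i) in *.
  set (xm := mesh beta a eps (INR N) N J (i - 1)) in *.
  destruct (coarse_step_bounds Q x1 H N J HQ HN HJ Hxi eq_refl) as [HHp HH].
  destruct (Hb x0 ltac:(lra)) as [Hbx Hbx'].
  rewrite tau_asi_error, Hp. fold x0 xm.
  eapply Rle_trans; [apply (asi_error_layer_bound A (b 0) (b x0) eps xm x0 (x0 + H) Bm L); try lra |].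
  { apply Hlip. lra. }
  replace (x0 + H - x0) with H by ring.
  assert (B1 := layer_across_transition_le beta (b 0) a eps (INR N) h H xm r0 ltac:(lra) ltac:(lra)
    ltac:(lra) shishkin_transition_condition HHp HH ltac:(fold x1; lra) Hhr).
  assert (B2 := layer_weight_past_transition beta (b 0) a eps (INR N) x0 ltac:(lra) ltac:(lra)
    ltac:(lra) ltac:(lra) ltac:(fold x1; lra)).
  unfold shishkin_coarse_const. fold r0.
  assert (HA := Rabs_pos A). rewrite (Rmult_assoc (Rabs A)). apply Rmult_le_compat_l; [lra |].
  replace ((4 * b 0 + Bm) * exp (- b 0 * xm / eps) / H) with ((4 * b 0 + Bm) * (exp (- b 0 * xm / eps) / H))
    by (field; lra).
  assert (T1 : (4 * b 0 + Bm) * (exp (- b 0 * xm / eps) / H)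
    <= (4 * b 0 + Bm) * (exp (b 0 * r0) * Rpower (INR N) (- a))) by (apply Rmult_le_compat_l; lra).
  assert (T2 : b 0 * L * (x0 / eps * exp (- b 0 * x0 / eps))
    <= b 0 * L * (/ (b 0 - beta) * Rpower (INR N) (- a))) by (apply Rmult_le_compat_l; nra).
  replace (((4 * b 0 + Bm) * exp (b 0 * r0) + b 0 * L / (b 0 - beta)) * Rpower (INR N) (- a))
    with ((4 * b 0 + Bm) * (exp (b 0 * r0) * Rpower (INR N) (- a))
          + b 0 * L * (/ (b 0 - beta) * Rpower (INR N) (- a))) by (field; lra).
  rewrite <- Rmult_assoc in T2. lra.
Qed.

End ShishkinLayer.

Definition layer_amplitude_const (b0 beta Bm L Cm Fm : R) : R :=
  let M := 2 * ((Fm + 1) / beta) in (M + Bm * M + (Cm * M + Fm + L * M)) / b0.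

Lemma layer_amplitude_bound (eps : R) (b c f u : R -> R) (beta Bm L Cm Fm : R) :
  0 < eps < 1 -> 0 < beta ->
  (forall x, 0 <= x <= 1 -> beta < b x) -> (forall x, 0 <= x <= 1 -> 0 <= c x) ->
  is_solution eps b c f u -> (forall x, 0 <= x <= 1 -> ex_derive b x) ->
  (forall x, 0 <= x <= 1 -> Rabs (b x) <= Bm) ->
  (forall x, 0 <= x <= 1 -> Rabs (Derive b x) <= L) ->
  (forall x, 0 <= x <= 1 -> Rabs (c x) <= Cm) ->
  (forall x, 0 <= x <= 1 -> Rabs (f x) <= Fm) ->
  Rabs (eps * Derive u 0 / b 0) <= layer_amplitude_const (b 0) beta Bm L Cm Fm.
Proof.
  intros He Hbeta Hbb Hcc Hs Hdb HB HL HC HF.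
  assert (Hb0 := Hbb 0 ltac:(lra)).
  assert (Hu := solution_abs_le eps b c f u beta Fm ltac:(lra) Hbeta Hbb Hcc HF Hs).
  assert (Hflux := solution_flux_at_0_bound eps b c f u Bm L Cm Fm _ He Hs Hdb HB HL HC HF Hu).
  unfold layer_amplitude_const. cbv zeta. unfold Rdiv at 1.
  rewrite Rabs_mult, Rabs_inv, (Rabs_pos_eq (b 0)) by lra.
  apply Rmult_le_compat_r; [apply Rlt_le, Rinv_0_lt_compat; lra | exact Hflux].
Qed.

Lemma abs_mul_le_sum (x K c d w : R) : Rabs x <= K -> 0 <= c -> 0 <= d -> 0 <= w ->
  Rabs x * (c * w) <= K * ((c + d) * w).
Proof.
  intros Hx Hc Hd Hw. apply Rmult_le_compat; [apply Rabs_pos | | exact Hx |]; nra.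
Qed.

Theorem lemma1 (b c f : R -> R) (beta a Q : R) :
  C4_01 b -> C4_01 c -> C4_01 f ->
  0 < beta ->
  (forall x, 0 <= x <= 1 -> beta < b x) ->
  (forall x, 0 <= x <= 1 -> 0 <= c x) ->
  0 < Q < 1 ->
  (exists p q : nat, (0 < q)%nat /\ Q = INR p / INR q) ->
  a >= beta / (b 0 - beta) ->
  exists C : R,
    forall (eps : R) (N J : nat) (u : R -> R),
      0 < eps < 1 ->
      (0 < N)%nat ->
      INR J = Q * INR N ->
      xi beta a eps (INR N) <= Q ->
      is_solution eps b c f u ->
      forall i : nat,
        ((1 <= i <= J - 1)%nat ->
           Rabs (tau beta a eps (INR N) N J b (vfun eps b u) i)
           <= C * (/ (INR N ^ 2)) * (ln (INR N)) ^ 2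
                * exp (- beta * mesh beta a eps (INR N) N J i / eps)) /\
        ((J <= i <= N - 1)%nat ->
           Rabs (tau beta a eps (INR N) N J b (vfun eps b u) i)
           <= C * Rpower (INR N) (- a)).
Proof.
  (* Rationality of Q only makes J = Q N an integer, which is assumed directly. *)
  intros Hb4 Hc4 Hf4 Hbeta Hbb Hcc HQ _ Ha.
  destruct (C4_01_derive_bounded b 0 Hb4 ltac:(lia)) as [Bm [_ HBm]].
  destruct (C4_01_derive_bounded b 1 Hb4 ltac:(lia)) as [L [HL HdB]].
  destruct (C4_01_derive_bounded c 0 Hc4 ltac:(lia)) as [Cm [_ HCm]].
  destruct (C4_01_derive_bounded f 0 Hf4 ltac:(lia)) as [Fm [_ HFm]].
  assert (Hdb : forall x, 0 <= x <= 1 -> ex_derive b x) by exact (proj1 Hb4 1%nat ltac:(lia)).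
  assert (Hb : forall x, 0 <= x <= 1 -> beta < b x <= Bm).
  { intros x Hx. assert (H := Rle_abs (b x)). specialize (HBm x Hx). specialize (Hbb x Hx).
    simpl in HBm. lra. }
  assert (Hlip := abs_sub_at_0_le b L Hdb HdB).
  destruct (shishkin_consts_nonneg b beta a Q Bm L Hbeta Hb HL HQ Ha) as [Hf Hc].
  exists (layer_amplitude_const (b 0) beta Bm L Cm Fm
          * (shishkin_fine_const (b 0) beta a Q Bm L + shishkin_coarse_const (b 0) beta a Q Bm L)).
  intros eps N J u He HN HJ Hxi Hsol i.
  assert (HA := layer_amplitude_bound eps b c f u beta Bm L Cm Fm He Hbeta Hbb Hcc Hsol Hdb
    HBm HdB HCm HFm).
  change (vfun eps b u) with (layer (eps * Derive u 0 / b 0) (b 0) eps).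
  split; intros Hi.
  - eapply Rle_trans; [apply (tau_layer_fine b beta a Q Bm L); auto |]. rewrite !Rmult_assoc.
    apply abs_mul_le_sum; auto.
    assert (0 < / INR N ^ 2) by (apply Rinv_0_lt_compat, pow_lt, lt_0_INR; lia).
    assert (0 < exp (- beta * mesh beta a eps (INR N) N J i / eps)) by apply exp_pos.
    assert (0 <= ln (INR N) ^ 2) by apply pow2_ge_0. apply Rmult_le_pos; nra.
  - eapply Rle_trans; [apply (tau_layer_coarse b beta a Q Bm L); auto |]. rewrite !Rmult_assoc.
    rewrite (Rplus_comm (shishkin_fine_const _ _ _ _ _ _)).
    apply abs_mul_le_sum; auto. apply Rlt_le, exp_pos.
Qed.
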